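(* Let $G$ be a graph and let $G_1,\dots,G_k$ be subgraphs of $G$ such that (i) the edge sets $E(G_1),\dots,E(G_k)$ are mutually disjoint; (ii) for each $i$, every maximal clique of $G_i$ is also a maximal clique of $G$; (iii) for each $i$, any maximal clique of $G$ belonging to $G_i$ and any maximal clique of $G$ not belonging to $G_i$ share at most one vertex. Then $p(G) \ge \sum_{i=1}^k p(G_i)$.
   Context: All graphs are finite and simple. For an acyclic digraph $D$, the phylogeny graph $P(D)$ is the graph on $V(D)$ in which distinct vertices $u,v$ are adjacent if and only if $(u,v)\in A(D)$, or $(v,u)\in A(D)$, or there is a vertex $w$ with $(u,w),(v,w)\in A(D)$. A phylogeny digraph for a graph $G$ is an acyclic digraph $D$ such that $G$ is an induced subgraph of $P(D)$ and $D$ has no arc from a vertex of $V(D)\setminus V(G)$ to a vertex of $V(G)$. The phylogeny number $p(G)$ is the minimum of $|V(D)\setminus V(G)|$ over all phylogeny digraphs $D$ for $G$. A clique of $G$ ''belongs to $G_i$'' if it is a clique of $G_i$. *)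

From mathcomp Require Import all_boot.
Set Implicit Arguments. Unset Strict Implicit. Unset Printing Implicit Defensive.

Definition is_graph (V : finType) (S : {set V}) (e : rel V) : Prop :=
  (forall u v, e u v -> (u \in S) && (v \in S)) /\
  (forall u, ~~ e u u) /\
  (forall u v, e u v = e v u).

Definition is_subgraph (V : finType) (S' : {set V}) (e' : rel V)
    (S : {set V}) (e : rel V) : Prop :=
  is_graph S' e' /\ S' \subset S /\ (forall u v, e' u v -> e u v).

Definition clique (V : finType) (S : {set V}) (e : rel V) (K : {set V}) : Prop :=
  K != set0 /\ K \subset S /\ (forall u v, u \in K -> v \in K -> u != v -> e u v).

Definition maximal_clique (V : finType) (S : {set V}) (e : rel V) (K : {set V}) : Prop :=
  clique S e K /\ (forall K', clique S e K' -> K \subset K' -> K' = K).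

Definition phylo_adj (T : finType) (a : rel T) (x y : T) : bool :=
  [|| a x y, a y x | [exists w, a x w && a y w]].

Definition acyclic (T : finType) (a : rel T) : Prop :=
  forall x y, a x y -> ~~ connect a y x.

(* D (arc relation a on V + 'I_n; its vertex set is inl @: S together with
   the n new vertices inr j) is a phylogeny digraph for the graph (S, e). *)
Definition is_phylogeny_digraph (V : finType) (S : {set V}) (e : rel V) (n : nat)
    (a : rel (V + 'I_n)) : Prop :=
  (forall x y, a x y ->
     match x with inl u => u \in S | inr _ => true end /\
     match y with inl v => v \in S | inr _ => true end) /\
  acyclic a /\
  (forall (j : 'I_n) (v : V), ~~ a (inr j) (inl v)) /\
  (forall u v, u \in S -> v \in S -> u != v -> e u v = phylo_adj a (inl u) (inl v)).

Definition phylo_admits (V : finType) (S : {set V}) (e : rel V) (n : nat) : Prop :=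
  exists a : rel (V + 'I_n), is_phylogeny_digraph S e a.

Definition is_phylogeny_number (V : finType) (S : {set V}) (e : rel V) (m : nat) : Prop :=
  phylo_admits S e m /\ (forall n, phylo_admits S e n -> m <= n).

From mathcomp Require Import all_boot.
Set Implicit Arguments. Unset Strict Implicit. Unset Printing Implicit Defensive.

(* Fix an optimal phylogeny digraph D of G.  Two distinct old vertices are
   adjacent in P(D) iff they lie together in the closed in-neighbourhood N[y]
   of some vertex y, and every N[y] is a clique of G.  By (ii) and (iii), a
   clique of G containing an edge of G_i lies in a maximal clique of G that
   belongs to G_i, so it is itself a clique of G_i.  Keeping in D only the
   arcs into the vertices y whose N[y] contains an edge of G_i therefore gives
   a phylogeny digraph of G_i, and by (i) each new vertex serves at most one
   index i in this way. *)

Definition cliqueb (V : finType) (S : {set V}) (e : rel V) (K : {set V}) : bool :=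
  [&& K != set0, K \subset S &
      [forall u, forall v, [&& u \in K, v \in K & u != v] ==> e u v]].

Lemma cliqueP (V : finType) (S : {set V}) (e : rel V) (K : {set V}) :
  reflect (clique S e K) (cliqueb S e K).
Proof.
apply: (iffP and3P) => [[K0 KS /forallP Kadj]|[K0 [KS Kadj]]]; do ?split => //.
  by move=> u v uK vK uv; have /forallP/(_ v) := Kadj u; rewrite uK vK uv.
by apply/forallP => u; apply/forallP => v; apply/implyP => /and3P[]; apply: Kadj.
Qed.

Lemma clique_maximal_superset (V : finType) (S : {set V}) (e : rel V) (C : {set V}) :
  clique S e C -> exists2 K, maximal_clique S e K & C \subset K.
Proof.
move/cliqueP/maxset_exists => [K /maxsetP[/cliqueP Kcl Kmax] CK].
by exists K => //; split=> // K' /cliqueP; apply: Kmax.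
Qed.

Lemma clique_subset (V : finType) (S : {set V}) (e : rel V) (C K : {set V}) :
  clique S e K -> C != set0 -> C \subset K -> clique S e C.
Proof.
move=> [_ [KS Kadj]] C0 CK; split=> //; split; first exact: subset_trans CK KS.
by move=> u v uC vC; apply: Kadj; apply: (subsetP CK).
Qed.

Lemma graph_edge_neq (V : finType) (S : {set V}) (e : rel V) (u v : V) :
  is_graph S e -> e u v -> u != v.
Proof. by move=> [_ [eirr _]] euv; apply: contraTneq euv => ->; apply: eirr. Qed.

Lemma edge_clique (V : finType) (S : {set V}) (e : rel V) (u v : V) :
  is_graph S e -> e u v -> clique S e [set u; v].
Proof.
move=> [eS [_ esym]] euv; have /andP[uS vS] := eS _ _ euv.
split; first by apply/set0Pn; exists u; rewrite !inE eqxx.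
split; first by apply/subsetP => w; rewrite !inE => /orP[] /eqP ->.
by move=> x y; rewrite !inE => /orP[] /eqP-> /orP[] /eqP->; rewrite ?eqxx // esym.
Qed.

Lemma clique_with_edge_in_subgraph (V : finType) (e : rel V) (S' : {set V})
    (E' : rel V) (C : {set V}) (u v : V) :
  is_subgraph S' E' [set: V] e ->
  (forall K, maximal_clique S' E' K -> maximal_clique [set: V] e K) ->
  (forall K K', maximal_clique [set: V] e K -> clique S' E' K ->
      maximal_clique [set: V] e K' -> ~ clique S' E' K' -> #|K :&: K'| <= 1) ->
  clique [set: V] e C -> u \in C -> v \in C -> E' u v -> clique S' E' C.
Proof.
move=> [E'graph _] maxE' meet_le1 Ccl uC vC E'uv.
have [K Kmax uvK] := clique_maximal_superset (edge_clique E'graph E'uv).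
have [K' K'max CK'] := clique_maximal_superset Ccl.
suff K'cl : clique S' E' K'.
  by apply: clique_subset K'cl _ CK'; apply/set0Pn; exists u.
case: (cliqueP S' E' K') => // notK'cl; exfalso.
have := meet_le1 K K' (maxE' K Kmax) (proj1 Kmax) K'max notK'cl.
apply/negP; rewrite -ltnNge.
have <- : #|[set u; v]| = 2 by rewrite cards2 (graph_edge_neq E'graph E'uv).
apply/subset_leq_card/subsetP => w uvw; rewrite inE (subsetP uvK) //=.
by apply: (subsetP CK'); move: uvw; rewrite !inE => /orP[] /eqP->.
Qed.

Definition closed_in_nbhd (V : finType) (n : nat) (b : rel (V + 'I_n))
    (y : V + 'I_n) : {set V} :=
  [set u | (y == inl u) || b (inl u) y].

Lemma closed_in_nbhd_self (V : finType) (n : nat) (b : rel (V + 'I_n)) (w : V) :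
  w \in closed_in_nbhd b (inl w).
Proof. by rewrite inE eqxx. Qed.

Lemma phylo_adjP (V : finType) (n : nat) (b : rel (V + 'I_n)) (u v : V) :
  u != v ->
  reflect (exists y, (u \in closed_in_nbhd b y) && (v \in closed_in_nbhd b y))
          (phylo_adj b (inl u) (inl v)).
Proof.
move=> uv; apply: (iffP or3P) => [[buv|bvu|/existsP[w /andP[buw bvw]]]|[y]].
- by exists (inl v); rewrite !inE eqxx buv orbT.
- by exists (inl u); rewrite !inE eqxx bvu orbT.
- by exists w; rewrite !inE buw bvw !orbT.
rewrite !inE => /andP[/orP[/eqP->|buy] /orP[/eqP vy|bvy]].
- by move: uv; case: vy => ->; rewrite eqxx.
- by apply: Or32.
- by move: buy; rewrite vy => /Or31.
- by apply: Or33; apply/existsP; exists y; rewrite buy.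
Qed.

Lemma acyclic_sub (T : finType) (a b : rel T) :
  (forall x y, b x y -> a x y) -> acyclic a -> acyclic b.
Proof.
move=> ba acyc x y /ba axy; apply: contra (acyc x y axy).
by apply: connect_sub => z z' /ba /connect1.
Qed.

Lemma phylo_admits_drop_sources (V : finType) (S : {set V}) (e : rel V) (n : nat)
    (b : rel (V + 'I_n)) (Z : {set 'I_n}) :
  is_phylogeny_digraph S e b -> (forall x j, b x (inr j) -> j \in Z) ->
  phylo_admits S e #|Z|.
Proof.
move=> [bS [bacyc [bnew badj]]] bZ.
pose f (x : V + 'I_#|Z|) : V + 'I_n :=
  match x with inl v => inl v | inr j => inr (enum_val j) end.
exists (fun x y => b (f x) (f y)); split; [|split; [|split]].
- by move=> [u|j] [v|j'] /bS.
- move=> x y bxy; apply: contra (bacyc _ _ bxy) => /connectP[p pp lp].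
  apply/connectP; exists (map f p).
    by apply: (homo_path (e := fun x y => b (f x) (f y))).
  by rewrite last_map -lp.
- by move=> j v; apply: bnew.
- move=> u v uS vS uv; rewrite badj //; congr [|| _, _ | _].
  apply/existsP/existsP => [[[w|j] /andP[buw bvw]]|[w bw]]; last by exists (f w).
    by exists (inl w); rewrite /= buw bvw.
  have jZ := bZ _ _ buw; exists (inr (enum_rank_in jZ j)).
  by rewrite /= enum_rankK_in // buw bvw.
Qed.

Lemma sum_card_disjoint (I T : finType) (Z : I -> {set T}) :
  (forall i i', i != i' -> [disjoint Z i & Z i']) -> \sum_i #|Z i| <= #|T|.
Proof.
move=> Zdisj; rewrite -sum1_card.
under eq_bigr => i _ do rewrite -sum1_card big_mkcond /=.
rewrite exchange_big /=; apply: leq_sum => t _.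
case: (pickP (fun i => t \in Z i)) => [i tZi|tZ]; last first.
  by rewrite big1 // => i _; rewrite tZ.
rewrite (bigD1 i) //= tZi big1 // => i' i'i; case: ifP => // tZi'.
by have := Zdisj i' i i'i; rewrite disjoint_sym => /disjointFr/(_ tZi); rewrite tZi'.
Qed.

Definition has_edge (V : finType) (F : rel V) (C : {set V}) : bool :=
  [exists u, exists v, [&& u \in C, v \in C & F u v]].

Section SubgraphRestriction.

Variables (V : finType) (e : rel V) (k : nat) (S : 'I_k -> {set V}) (E : 'I_k -> rel V).
Hypothesis subG : forall i, is_subgraph (S i) (E i) [set: V] e.
Hypothesis maxcl_sub :
  forall i K, maximal_clique (S i) (E i) K -> maximal_clique [set: V] e K.
Hypothesis meet_le1 :
  forall i K K', maximal_clique [set: V] e K -> clique (S i) (E i) K ->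
    maximal_clique [set: V] e K' -> ~ clique (S i) (E i) K' -> #|K :&: K'| <= 1.

Variables (n : nat) (a : rel (V + 'I_n)).
Hypothesis aphyl : is_phylogeny_digraph [set: V] e a.

Local Notation N := (closed_in_nbhd a).

Lemma closed_in_nbhd_adj y u v : u \in N y -> v \in N y -> u != v -> e u v.
Proof.
move=> uy vy uv; have [_ [_ [_ aadj]]] := aphyl.
by rewrite aadj ?inE //; apply/phylo_adjP => //; exists y; rewrite uy.
Qed.

Lemma edge_nbhd_clique i y : has_edge (E i) (N y) -> clique (S i) (E i) (N y).
Proof.
move=> /existsP[u /existsP[v /and3P[uy vy Euv]]].
apply: (clique_with_edge_in_subgraph (subG i) (@maxcl_sub i) (@meet_le1 i) _ uy vy Euv).
split; first by apply/set0Pn; exists u.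
by split; [apply: subsetT | apply: closed_in_nbhd_adj].
Qed.

Lemma edge_nbhd_sub i y u : has_edge (E i) (N y) -> u \in N y -> u \in S i.
Proof. by move=> /edge_nbhd_clique[_ [/subsetP NS _]] /NS. Qed.

Definition restr_arcs i (x y : V + 'I_n) : bool :=
  if x is inl _ then a x y && has_edge (E i) (N y) else false.

Lemma restr_arcs_sub i x y : restr_arcs i x y -> a x y.
Proof. by case: x => // u /andP[]. Qed.

Lemma restr_arcs_has_edge i x y : restr_arcs i x y -> has_edge (E i) (N y).
Proof. by case: x => // u /andP[]. Qed.

Lemma closed_in_nbhd_restr_arcs_edge i y :
  has_edge (E i) (N y) -> closed_in_nbhd (restr_arcs i) y = N y.
Proof. by move=> my; apply/setP => u; rewrite !inE /restr_arcs my andbT. Qed.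

Lemma closed_in_nbhd_restr_arcs_pair i y u v :
  u \in closed_in_nbhd (restr_arcs i) y -> v \in closed_in_nbhd (restr_arcs i) y ->
  u != v ->
  has_edge (E i) (N y) && (u \in N y) && (v \in N y).
Proof.
rewrite !inE => /orP[/eqP yu|ruy] /orP[/eqP yv|rvy] uv.
- by move: uv; rewrite -[u == v]/(inl u == inl v :> V + 'I_n) -yu -yv eqxx.
- by rewrite (restr_arcs_has_edge rvy) (restr_arcs_sub rvy) yu eqxx !orbT.
- by rewrite (restr_arcs_has_edge ruy) (restr_arcs_sub ruy) yv eqxx !orbT.
- by rewrite (restr_arcs_has_edge ruy) !(restr_arcs_sub ruy, restr_arcs_sub rvy) !orbT.
Qed.

Lemma restr_arcs_phylogeny_digraph i :
  is_phylogeny_digraph (S i) (E i) (restr_arcs i).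
Proof.
have [_ [_ Ee]] := subG i.
have [_ [aacyc [_ aadj]]] := aphyl.
split; [|split; [|split]].
- move=> [u|//] y /andP[auy my]; split.
    by apply: edge_nbhd_sub my _; rewrite inE auy orbT.
  by case: y auy my => // w _ mw; apply: edge_nbhd_sub mw (closed_in_nbhd_self _ _).
- exact: acyclic_sub (@restr_arcs_sub i) aacyc.
- by [].
move=> u v uS vS uv; apply/idP/phylo_adjP => // [Euv|[y /andP[uy vy]]].
  have /(phylo_adjP _ uv)[y /andP[uy vy]] : phylo_adj a (inl u) (inl v).
    by rewrite -aadj ?inE // Ee.
  have my : has_edge (E i) (N y).
    by apply/existsP; exists u; apply/existsP; exists v; rewrite uy vy.
  by exists y; rewrite closed_in_nbhd_restr_arcs_edge // uy.
have /andP[/andP[my uNy] vNy] := closed_in_nbhd_restr_arcs_pair uy vy uv.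
by have [_ [_ Eadj]] := edge_nbhd_clique my; apply: Eadj.
Qed.

Lemma edge_nbhd_index_unique i i' y :
  (forall i i', i != i' -> forall u v, ~~ (E i u v && E i' u v)) ->
  has_edge (E i) (N y) -> has_edge (E i') (N y) -> i = i'.
Proof.
move=> Edisj /existsP[u /existsP[v /and3P[uy vy Eiuv]]].
move=> /edge_nbhd_clique[_ [_ Ei'adj]].
apply/eqP/contraT => ii'; have := Edisj i i' ii' u v; rewrite Eiuv Ei'adj //.
by have [Eigraph _] := subG i; apply: graph_edge_neq Eigraph Eiuv.
Qed.

End SubgraphRestriction.

Theorem mainTheorem2 (V : finType) (e : rel V) (k : nat)
    (S : 'I_k -> {set V}) (E : 'I_k -> rel V) (pG : nat) (p : 'I_k -> nat) :
  is_graph [set: V] e ->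
  (forall i, is_subgraph (S i) (E i) [set: V] e) ->
  (forall i j, i != j -> forall u v, ~~ (E i u v && E j u v)) ->
  (forall i K, maximal_clique (S i) (E i) K -> maximal_clique [set: V] e K) ->
  (forall i K K', maximal_clique [set: V] e K -> clique (S i) (E i) K ->
      maximal_clique [set: V] e K' -> ~ clique (S i) (E i) K' ->
      #|K :&: K'| <= 1) ->
  is_phylogeny_number [set: V] e pG ->
  (forall i, is_phylogeny_number (S i) (E i) (p i)) ->
  \sum_(i < k) p i <= pG.
Proof.
move=> _ subG Edisj maxcl_sub meet_le1 [[a aphyl] _] pmin.
pose Z i := [set j | has_edge (E i) (closed_in_nbhd a (inr j))].
apply: (@leq_trans (\sum_(i < k) #|Z i|)).
  apply: leq_sum => i _; apply: (proj2 (pmin i)).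
  apply: phylo_admits_drop_sources
    (restr_arcs_phylogeny_digraph subG maxcl_sub meet_le1 aphyl i) _.
  by move=> [x|//] j /andP[_ mj]; rewrite inE.
rewrite -[pG in _ <= pG]card_ord; apply: sum_card_disjoint => i i' ii'.
apply/pred0P => j; rewrite !inE; apply: contraNF ii' => /andP[mi mi'].
by have -> := edge_nbhd_index_unique subG maxcl_sub meet_le1 aphyl Edisj mi mi'.
Qed.
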